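(* Let $n\ge1$. (1) Let $X$ be an interval in $\mathcal{K}$ with at least two elements (with the subspace topology). A map $f:X\to X$ has closed graph if and only if there is an integer $\lambda$ with $2\lambda\in X$ such that $f$ is the constant map with value $2\lambda$. (2) A map $f:\mathcal{K}^n\to\mathcal{K}^n$ has closed graph if and only if there are integers $\lambda_1,\ldots,\lambda_n$ such that $f$ is the constant map with value $(2\lambda_1,\ldots,2\lambda_n)$. (3) A map $f:A(\mathcal{K}^n)\to A(\mathcal{K}^n)$ has closed graph if and only if either there are integers $\lambda_1,\ldots,\lambda_n$ such that $f$ is the constant map with value $(2\lambda_1,\ldots,2\lambda_n)$, or $f$ is the constant map with value $\infty$. In particular (cases $n=1,2$ of (3)), every self-map with closed graph on the Khalimsky circle $A(\mathcal{K})$ or on the Khalimsky sphere $A(\mathcal{K}^2)$ is constant.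
   Context: The Khalimsky line $\mathcal{K}$ is $\mathbb{Z}$ equipped with the topology generated by the basis $\{\{2m-1,2m,2m+1\}:m\in\mathbb{Z}\}\cup\{\{2m+1\}:m\in\mathbb{Z}\}$; $\mathcal{K}^n$ is its $n$-fold product with the product topology. An interval in $\mathcal{K}$ is one of: $\varnothing$, $\mathcal{K}$, $\{x\in\mathbb{Z}:a\le x\le b\}$ for integers $a\le b$, $\{x\in\mathbb{Z}:x\ge a\}$ or $\{x\in\mathbb{Z}:x\le a\}$ for an integer $a$. For a topological space $Y$ and a point $\infty\notin Y$, the one-point (Alexandroff) compactification $A(Y)=Y\cup\{\infty\}$ has topology $\{U: U\text{ open in }Y\}\cup\{U\subseteq A(Y):\infty\in U,\ Y\setminus U\text{ is a compact closed subset of }Y\}$. $A(\mathcal{K})$ is called the Khalimsky circle and $A(\mathcal{K}^2)$ the Khalimsky sphere. A map $f:X\to X$ has closed graph if $G_f=\{(x,f(x)):x\in X\}$ is closed in $X\times X$ (product topology); $f$ is not assumed continuous. *)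

From Stdlib Require Import ZArith List.
From mathcomp Require Import all_boot.

Set Implicit Arguments.
Unset Strict Implicit.
Unset Printing Implicit Defensive.

Definition pset (T : Type) := T -> Prop.

Record space := Space { carrier :> Type; isopen : pset carrier -> Prop }.

Definition generated (T : Type) (B : pset (pset T)) : pset T -> Prop :=
  fun U => forall x, U x -> exists b, B b /\ b x /\ (forall y, b y -> U y).

Definition isclosed (S : space) (A : pset S) : Prop :=
  isopen (fun x => ~ A x).

Definition khal_basis : pset (pset Z) := fun b =>
  (exists m : Z, b = (fun x => (2*m - 1 <= x <= 2*m + 1)%Z)) \/
  (exists m : Z, b = (fun x => x = (2*m + 1)%Z)).

Definition Khalimsky : space := @Space Z (generated khal_basis).

Definition subspace (S : space) (A : pset S) : space :=
  @Space {x : S | A x}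
    (fun V => exists U, isopen U /\ forall y : {x : S | A x}, V y <-> U (proj1_sig y)).

Arguments subspace : clear implicits.

Definition prod_space (S T : space) : space :=
  @Space (S * T)%type
    (generated (fun b => exists U V, @isopen S U /\ @isopen T V /\
                 b = (fun p : S * T => U p.1 /\ V p.2))).

Definition pow_space (S : space) (n : nat) : space :=
  @Space ('I_n -> S)
    (generated (fun b => exists U : 'I_n -> pset S, (forall i, isopen (U i)) /\
                 b = (fun x : 'I_n -> S => forall i, U i (x i)))).

Definition Kn (n : nat) : space := pow_space Khalimsky n.

Definition compact_set (S : space) (A : pset S) : Prop :=
  forall (I : Type) (V : I -> pset S), (forall i, isopen (V i)) ->
    (forall x, A x -> exists i, V i x) ->
    exists l : list I, forall x, A x -> exists i, In i l /\ V i x.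

(* A(Y) = option Y, with None playing the role of the point at infinity. *)
Definition alexandroff (S : space) : space :=
  @Space (option S)
    (fun U =>
       (~ U None /\ isopen (fun y => U (Some y))) \/
       (U None /\ compact_set (fun y => ~ U (Some y))
              /\ isclosed (fun y => ~ U (Some y)))).

Definition closed_graph (S : space) (f : S -> S) : Prop :=
  @isclosed (prod_space S S) (fun p => p.2 = f p.1).

Definition khal_interval (X : pset Z) : Prop :=
  (forall x, ~ X x) \/
  (forall x, X x) \/
  (exists a b, (a <= b)%Z /\ forall x, X x <-> (a <= x <= b)%Z) \/
  (exists a, forall x, X x <-> (x >= a)%Z) \/
  (exists a, forall x, X x <-> (x <= a)%Z).

(* The Khalimsky topology is an Alexandrov topology: [z] lies in the smallest
   neighbourhood of [y] iff [y] is even and [|z - y| <= 1], or [z = y], and the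
   open sets are exactly the sets closed upwards under this relation; the same
   holds coordinatewise on K^n.  A closed graph forces two things.  If [x'] lies
   in every neighbourhood of [x], then [f x' = f x]; since of two consecutive
   integers one always lies in every neighbourhood of the other, [f] is constant
   along intervals, hence constant.  And no point [y <> f x] may have [f x] in
   all its neighbourhoods, which makes the value even.  On A(K^n) the point at
   infinity is adherent to K^n (K^n is not compact), so it takes the same value. *)
From Stdlib Require Import ZArith Lia List Classical FunctionalExtensionality ProofIrrelevance.
From mathcomp Require Import all_boot zify.

Section ClosedGraph.

Context {S : space}.

Lemma closed_graph_separate {f : S -> S} {x y} : closed_graph f -> y <> f x ->
  exists U V, isopen U /\ isopen V /\ U x /\ V y /\ forall x', U x' -> ~ V (f x').
Proof.
move=> fC yNfx; have [_ [[U [V [oU [oV ->]]]] [[Ux Vy] sub]]] := fC (x, y) yNfx.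
exists U, V; do 4 split => //; move=> x' Ux' Vfx'; exact: (sub (x', f x')).
Qed.

Lemma closed_graph_adherent {f : S -> S} a c : closed_graph f ->
  (forall U, isopen U -> U a -> exists x, U x /\ f x = c) -> f a = c.
Proof.
move=> fC adh; apply: NNPP => fa_neq; have cNfa : c <> f a by move=> E; apply: fa_neq.
have [U [V [oU [_ [Ua [Vc disj]]]]]] := closed_graph_separate fC cNfa.
have [x [Ux fx]] := adh U oU Ua; apply: (disj x Ux); rewrite fx; exact: Vc.
Qed.

Lemma closed_graph_const {f : S -> S} {c} : (forall x, f x = c) ->
  @isopen S (fun _ => True) -> @isopen S (fun y => y <> c) -> closed_graph f.
Proof.
move=> fc oT oNc p fp_neq.
exists (fun q : S * S => True /\ q.2 <> c); split.
  by exists (fun _ => True), (fun y => y <> c).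
split; first by split=> //; rewrite -(fc p.1).
by move=> q [_ q2Nc] /=; rewrite fc.
Qed.

(* [N a b] is meant as "b lies in every neighbourhood of a". *)
Context {N : S -> S -> Prop}.
Hypothesis open_upward : forall {U : pset S} {a b : S}, isopen U -> U a -> N a b -> U b.

Lemma closed_graph_nbhd_invariant {f : S -> S} :
  closed_graph f -> forall x x', N x x' -> f x' = f x.
Proof.
move=> fC x x' xx'; apply: NNPP => neq.
have [U [V [oU [_ [Ux [Vfx disj]]]]]] := closed_graph_separate fC neq.
exact: (disj x' (open_upward oU Ux xx') Vfx).
Qed.

Lemma closed_graph_value_isolated {f : S -> S} :
  closed_graph f -> forall x y, N y (f x) -> y = f x.
Proof.
move=> fC x y yfx; apply: NNPP => neq.
have [U [V [_ [oV [Ux [Vy disj]]]]]] := closed_graph_separate fC neq.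
exact: (disj x Ux (open_upward oV Vy yfx)).
Qed.

End ClosedGraph.

Open Scope Z_scope.

Definition khal_nbhd (y z : Z) : Prop :=
  (exists m, y = 2 * m /\ 2 * m - 1 <= z <= 2 * m + 1) \/ z = y.

Lemma khal_nbhd_refl y : khal_nbhd y y.
Proof. by right. Qed.

Lemma khal_nbhd_trans {y z w} : khal_nbhd y z -> khal_nbhd z w -> khal_nbhd y w.
Proof.
case=> [[m [-> ?]]|->]; last by [].
case=> [[k [? ?]]|->]; left; exists m; lia.
Qed.

Lemma khal_nbhd_even y l : khal_nbhd y (2 * l) -> y = 2 * l.
Proof. case=> [[m [? ?]]|?]; lia. Qed.

Lemma khal_nbhd_succ x : khal_nbhd x (x + 1) \/ khal_nbhd (x + 1) x.
Proof.
have [[m ->]|[m ->]] := Z.Even_or_Odd x.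
- by left; left; exists m; lia.
- by right; left; exists (m + 1); lia.
Qed.

Lemma khal_nbhd_odd {v} : Z.Odd v -> khal_nbhd (v - 1) v /\ khal_nbhd (v + 1) v.
Proof. by case=> m ->; split; left; [exists m | exists (m + 1)]; lia. Qed.

Lemma khal_open_upward (U : pset Z) y z :
  @isopen Khalimsky U -> U y -> khal_nbhd y z -> U z.
Proof.
move=> oU Uy yz; have [b [[[m ->]|[m ->]] [yb sub]]] := oU y Uy; apply: sub;
  cbv beta in yb |- *; case: yz => [[k [? ?]]|->] //; lia.
Qed.

Lemma khal_open_of_upward (U : pset Z) :
  (forall y z, U y -> khal_nbhd y z -> U z) -> @isopen Khalimsky U.
Proof.
move=> up y Uy; have [[m ym]|[m ym]] := Z.Even_or_Odd y.
- exists (fun x => 2 * m - 1 <= x <= 2 * m + 1); split; first by left; exists m.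
  split; first lia.
  by move=> z zm; apply: (up y) => //; left; exists m; lia.
- exists (fun x => x = 2 * m + 1); split; first by right; exists m.
  by split=> [|z ->]; rewrite -?ym.
Qed.

Definition convex (X : pset Z) : Prop :=
  forall p q r, X p -> X q -> p <= r <= q -> X r.

Lemma khal_interval_convex {X} : khal_interval X -> convex X.
Proof.
case=> [X0|[XT|[[a [b [_ Xab]]]|[[a Xa]|[a Xa]]]]] p q r Xp Xq pr.
- by case: (X0 p).
- exact: XT.
- by apply/Xab; move/Xab: Xp; move/Xab: Xq; lia.
- by apply/Xa; move/Xa: Xp; move/Xa: Xq; lia.
- by apply/Xa; move/Xa: Xp; move/Xa: Xq; lia.
Qed.

Lemma sig_Z_inj (X : pset Z) (p q : {x : Z | X x}) : proj1_sig p = proj1_sig q -> p = q.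
Proof.
case: p q => [p Xp] [q Xq] /= pq; subst q; congr exist; exact: proof_irrelevance.
Qed.

Lemma convex_khal_invariant_const {X : pset Z} {T : Type} {g : {x : Z | X x} -> T} :
  convex X ->
  (forall x x' : {x : Z | X x}, khal_nbhd (proj1_sig x) (proj1_sig x') -> g x' = g x) ->
  forall x y, g x = g y.
Proof.
move=> cX inv.
have step x y : proj1_sig y = proj1_sig x + 1 -> g y = g x.
  by move=> yx; case: (khal_nbhd_succ (proj1_sig x)) => s; [|symmetry]; apply: inv; rewrite yx.
have up (k : nat) x y : proj1_sig y = proj1_sig x + Z.of_nat k -> g y = g x.
  elim: k y => [|k IH] y yx; first by congr g; apply: sig_Z_inj; lia.
  case: x y yx {IH}(IH) => [x Xx] [y Xy] /= yx IH.
  have Xz : X (x + Z.of_nat k) by apply: (cX x y) => //; lia.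
  rewrite (step (exist X _ Xz)) /= ?(IH (exist X _ Xz)) //; lia.
move=> x y; have [xy|yx] := Z_le_gt_dec (proj1_sig x) (proj1_sig y).
- by symmetry; apply: (up (Z.to_nat (proj1_sig y - proj1_sig x))); lia.
- by apply: (up (Z.to_nat (proj1_sig x - proj1_sig y))); lia.
Qed.

Section ProductSpace.

Context {n : nat}.

Definition Kn_nbhd (y z : 'I_n -> Z) : Prop := forall i, khal_nbhd (y i) (z i).

Lemma Kn_open_upward (U : pset (Kn n)) (y z : Kn n) :
  isopen U -> U y -> Kn_nbhd y z -> U z.
Proof.
move=> oU Uy yz; have [_ [[V [oV ->]] [Vy sub]]] := oU y Uy.
by apply: sub => i; apply: khal_open_upward (oV i) (Vy i) (yz i).
Qed.

Lemma Kn_open_of_upward (U : pset ('I_n -> Z)) :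
  (forall y z, U y -> Kn_nbhd y z -> U z) -> @isopen (Kn n) U.
Proof.
move=> up y Uy; exists (Kn_nbhd y); split.
  exists (fun i => khal_nbhd (y i)); split=> // i.
  by apply: khal_open_of_upward => a b ya ab; apply: khal_nbhd_trans ya ab.
by split=> [i|z]; [apply: khal_nbhd_refl | apply: up].
Qed.

Lemma Kn_nbhd_even {y} {lam : 'I_n -> Z} :
  Kn_nbhd y (fun i => 2 * lam i) -> y = (fun i => 2 * lam i).
Proof. by move=> ylam; apply: functional_extensionality => i; apply: khal_nbhd_even. Qed.

Lemma Kn_even_open_compl (lam : 'I_n -> Z) :
  @isopen (Kn n) (fun y => y <> (fun i => 2 * lam i)).
Proof.
by apply: Kn_open_of_upward => y z yN yz zE; apply: yN; subst z; apply: Kn_nbhd_even.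
Qed.

Definition set_coord (x : 'I_n -> Z) (i : 'I_n) (z : Z) : 'I_n -> Z :=
  fun j => if j == i then z else x j.

Lemma coordwise_const (T : Type) (g : ('I_n -> Z) -> T) :
  (forall x i z, g (set_coord x i z) = g x) -> forall x y, g x = g y.
Proof.
move=> inv.
suff agree_from : forall (k : nat) x y,
    (forall j : 'I_n, (k <= j)%N -> x j = y j) -> g x = g y.
  by move=> x y; apply: (agree_from n) => j; have := ltn_ord j; lia.
move=> k; elim: k => [|k IH] x y xy.
  by congr g; apply: functional_extensionality => j; apply: xy.
case: (ltnP k n) => [kn|nk]; last by apply: IH => j kj; apply: xy; have := ltn_ord j; lia.
pose i := Ordinal kn; rewrite -(inv x i (y i)); apply: IH => j kj.
rewrite /set_coord; case: eqVneq => [->|ji] //; apply: xy.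
suff : nat_of_ord j <> k by lia.
by move=> jk; move/eqP: ji; apply; apply: val_inj.
Qed.

Lemma Kn_invariant_const {T : Type} {g : Kn n -> T} :
  (forall x x', Kn_nbhd x x' -> g x' = g x) -> forall x y, g x = g y.
Proof.
move=> inv; apply: coordwise_const => x i z.
pose h (c : {z : Z | True}) := g (set_coord x i (proj1_sig c)).
have -> : g x = h (exist _ (x i) I).
  by congr g; apply: functional_extensionality => j; rewrite /set_coord; case: eqVneq => [->|].
rewrite -[g (set_coord x i z)]/(h (exist _ z I)).
apply: convex_khal_invariant_const => // c c' cc'; apply: inv => j.
by rewrite /set_coord; case: eqVneq => _; [exact: cc' | exact: khal_nbhd_refl].
Qed.

Lemma Kn_isolated_even {v : 'I_n -> Z} :
  (forall y, Kn_nbhd y v -> y = v) -> exists lam : 'I_n -> Z, v = (fun i => 2 * lam i).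
Proof.
move=> iso; exists (fun i => v i / 2); apply: functional_extensionality => i.
have [[m vm]|vodd] := Z.Even_or_Odd (v i).
  by rewrite vm Z.mul_comm Z.div_mul; lia.
have /iso /(f_equal (fun y => y i)) : Kn_nbhd (set_coord v i (v i + 1)) v.
  by move=> j; rewrite /set_coord; case: eqVneq => [->|_];
    [exact: (khal_nbhd_odd vodd).2 | exact: khal_nbhd_refl].
by rewrite /set_coord /= eqxx; lia.
Qed.

Lemma Kn_closed_graph (f : Kn n -> Kn n) :
  closed_graph f <-> exists lam : 'I_n -> Z, forall x, f x = (fun i => 2 * lam i).
Proof.
split=> [fC|[lam flam]].
- have value_iso := closed_graph_value_isolated Kn_open_upward fC.
  have [lam vlam] := Kn_isolated_even (value_iso (fun _ => 0)).
  exists lam => x; rewrite -vlam.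
  exact: (Kn_invariant_const (closed_graph_nbhd_invariant Kn_open_upward fC) x).
- apply: (closed_graph_const flam); last exact: Kn_even_open_compl.
  by apply: Kn_open_of_upward.
Qed.

End ProductSpace.

Lemma convex_isolated_even {X : pset Z} {v} : convex X -> X v ->
  (exists a b, X a /\ X b /\ a <> b) ->
  (forall u, X u -> khal_nbhd u v -> u = v) -> Z.Even v.
Proof.
move=> cX Xv [a [b [Xa [Xb ab]]]] iso.
have [//|vodd] := Z.Even_or_Odd v; have [below above] := khal_nbhd_odd vodd.
have [w [Xw wv]] : exists w, X w /\ w <> v.
  by case: (Z.eq_dec a v) => [av|]; [exists b; split=> //; lia | exists a].
have [wv'|wv'] := Z_le_gt_dec w v.
- have /iso /(_ below) : X (v - 1) by apply: (cX w v) => //; lia.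
  lia.
- have /iso /(_ above) : X (v + 1) by apply: (cX v w) => //; lia.
  lia.
Qed.

Section IntervalSubspace.

Variable X : pset Z.

Lemma subspace_open_upward (U : pset (subspace Khalimsky X)) (a b : subspace Khalimsky X) :
  isopen U -> U a -> khal_nbhd (proj1_sig a) (proj1_sig b) -> U b.
Proof.
by move=> [W [oW UW]] Ua ab; apply/UW; apply: khal_open_upward oW (proj1 (UW a) Ua) ab.
Qed.

Lemma interval_closed_graph (f : subspace Khalimsky X -> subspace Khalimsky X) :
  khal_interval X -> (exists a b, X a /\ X b /\ a <> b) ->
  closed_graph f <-> exists lam : Z, X (2 * lam) /\ forall x, proj1_sig (f x) = 2 * lam.
Proof.
move=> iX two; have cX := khal_interval_convex iX; split=> [fC|[lam [Xlam flam]]].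
- have [a [_ [Xa _]]] := two; pose x0 : subspace Khalimsky X := exist X a Xa.
  have f_const x : f x = f x0.
    have inv := closed_graph_nbhd_invariant subspace_open_upward fC.
    exact: convex_khal_invariant_const cX inv x x0.
  have [lam vlam] : Z.Even (proj1_sig (f x0)).
    apply: (convex_isolated_even cX (proj2_sig (f x0)) two) => u Xu uv.
    have := closed_graph_value_isolated subspace_open_upward fC x0 (exist X u Xu) uv.
    by move/(f_equal (@proj1_sig _ _)).
  by exists lam; rewrite -vlam; split=> [|x]; [exact: proj2_sig (f x0) | rewrite f_const].
- have fc x : f x = exist X (2 * lam) Xlam by apply: sig_Z_inj; rewrite flam.
  apply: (closed_graph_const fc).
    by exists (fun _ => True); split=> //; apply: khal_open_of_upward.
  exists (fun z => z <> 2 * lam); split.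
    by apply: khal_open_of_upward => y z yN yz zE; apply: yN; subst z; apply: khal_nbhd_even.
  by move=> y; split=> [yN yE | yN yE]; apply: yN; [apply: sig_Z_inj | rewrite yE].
Qed.

End IntervalSubspace.

Section OnePointCompactification.

Context {n : nat}.

Definition alex_nbhd (a b : alexandroff (Kn n)) : Prop :=
  if (a, b) is (Some y, Some z) then Kn_nbhd y z else False.

Lemma alex_open_upward (U : pset (alexandroff (Kn n))) a b :
  isopen U -> U a -> alex_nbhd a b -> U b.
Proof.
case: a b => [y|] [z|] //= [[_ oU]|[_ [_ cU]]] Uy yz.
- exact: Kn_open_upward oU Uy yz.
- apply: NNPP.
  exact: (@Kn_open_upward n (fun x => ~ ~ U (Some x)) y z cU (fun nUy => nUy Uy) yz).
Qed.

Lemma alex_open_full : @isopen (alexandroff (Kn n)) (fun _ => True).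
Proof.
right; do 2 split=> //; first by move=> I V _ _; exists nil.
by apply: Kn_open_of_upward.
Qed.

(* K^n is not compact: the open slabs [|z i0| <= 2m+1] cover it without a finite subcover. *)
Lemma alex_infinity_adherent {U : pset (alexandroff (Kn n))} : (0 < n)%N ->
  isopen U -> U None -> exists x, U (Some x).
Proof.
move=> n_pos [[//]|[_ [cU _]]] _; apply: NNPP => noSome; pose i0 := Ordinal n_pos.
have [|z _|l cover] :=
  cU nat (fun m (z : Kn n) => - 2 * Z.of_nat m - 1 <= z i0 <= 2 * Z.of_nat m + 1).
- move=> m; apply: Kn_open_of_upward => y z yz /(_ i0) [[k [? ?]]|?]; lia.
- by exists (Z.to_nat (Z.abs (z i0))); lia.
have [|m [lm zm]] := cover (fun _ => 2 * Z.of_nat (list_max l) + 3).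
  by move=> Uz; apply: noSome; eexists; exact: Uz.
have /Forall_forall /(_ m lm) := proj1 (list_max_le l (list_max l)) (le_n _).
lia.
Qed.

Lemma alex_closed_graph (f : alexandroff (Kn n) -> alexandroff (Kn n)) : (0 < n)%N ->
  closed_graph f <->
  (exists lam : 'I_n -> Z, forall x, f x = Some (fun i => 2 * lam i)) \/
  (forall x, f x = None).
Proof.
move=> n_pos; split=> [fC|[[lam flam]|fNone]].
- pose x0 : Kn n := fun _ => 0.
  have fSome x : f (Some x) = f (Some x0).
    apply: (@Kn_invariant_const _ _ (fun x => f (Some x))) => y y' yy'.
    exact: (closed_graph_nbhd_invariant alex_open_upward fC (Some y) (Some y') yy').
  have fInf : f None = f (Some x0).
    apply: (closed_graph_adherent _ _ fC) => U oU UNone.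
    by have [x Ux] := alex_infinity_adherent n_pos oU UNone; exists (Some x).
  have f_const x : f x = f (Some x0) by case: x => [x|]; [exact: fSome | exact: fInf].
  case E: (f (Some x0)) f_const => [v|] f_const; [left | by right].
  have [|lam vlam] := @Kn_isolated_even n v.
    move=> y yv; have := closed_graph_value_isolated alex_open_upward fC (Some x0) (Some y).
    by rewrite E => /(_ yv) [].
  by exists lam => x; rewrite f_const vlam.
- apply: (closed_graph_const flam alex_open_full).
  right; split=> //; split.
    move=> I V _ cover; have [i Vi] := cover (fun i => 2 * lam i) (fun N => N erefl).
    exists [:: i] => x xE; exists i; split; first by left.
    suff -> : x = (fun i => 2 * lam i) by [].
    by apply: NNPP => xN; apply: xE => -[].
  apply: Kn_open_of_upward => y z yN yz zE; apply: zE => -[zlam]; subst z.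
  by apply: yN; rewrite (Kn_nbhd_even yz).
- apply: (closed_graph_const fNone alex_open_full).
  by left; split=> [|]; [|apply: Kn_open_of_upward].
Qed.

End OnePointCompactification.

Theorem mainTheorem5 (n : nat) (hn : (1 <= n)%N) :
  (forall (X : pset Z), khal_interval X ->
     (exists a b, X a /\ X b /\ a <> b) ->
     forall f : subspace Khalimsky X -> subspace Khalimsky X,
       closed_graph f <->
       (exists lam : Z, X (2 * lam)%Z /\ forall x, proj1_sig (f x) = (2 * lam)%Z)) /\
  (forall f : Kn n -> Kn n,
     closed_graph f <->
     exists lam : 'I_n -> Z, forall x, f x = (fun i => (2 * lam i)%Z)) /\
  (forall f : alexandroff (Kn n) -> alexandroff (Kn n),
     closed_graph f <->
     ((exists lam : 'I_n -> Z, forall x, f x = Some (fun i => (2 * lam i)%Z)) \/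
      (forall x, f x = None))).
Proof.
split; first by move=> X iX two f; apply: interval_closed_graph.
by split=> f; [apply: Kn_closed_graph | apply: alex_closed_graph].
Qed.
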